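(* Let $n\ge5$ be odd and $M$ an $n\times n$ HW-matrix. There is no spin$^c$ set for $M$.
   Context: $\mathcal S=\{0,1,2,3\}$ is the Klein four-group ($\mathbb Z_2$-vector space) with $x+x=0$, $1+2=3$, $1+3=2$, $2+3=1$. $\mathcal P_n$ is the power set of $\{1,\dots,n\}$ (addition = symmetric difference, product = intersection); $|U|_2=|U|\bmod 2$; $J_M(U)=\{j:\sum_{i\in U}M_{ij}=1\}$. $M$ is an HW-matrix if it has $1$ on the diagonal and $2$ or $3$ off the diagonal, all column sums are $0$, and $J_M(U)\ne\emptyset$ for all $U\ne\emptyset,\{1,\dots,n\}$. $S\in\mathcal P_n$ is a spin$^c$ set for $M$ if $|(J_M(U)+U)\cap S|_2=\binom{|U|}2\bmod 2$ for all $U\in\mathcal P_n$. *)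

From HB Require Import structures.
From mathcomp Require Import all_boot all_order all_algebra.
Set Implicit Arguments. Unset Strict Implicit. Unset Printing Implicit Defensive.
Import GRing.Theory.
Local Open Scope ring_scope.

(* The Klein four-group S = {0,1,2,3}, realized as F_2 x F_2 with
   0 = (0,0), 1 = (1,0), 2 = (0,1), 3 = (1,1); so 1+2 = 3, 1+3 = 2, 2+3 = 1. *)
Definition S := ('F_2 * 'F_2)%type.
Definition s0 : S := (0, 0).
Definition s1 : S := (1, 0).
Definition s2 : S := (0, 1).
Definition s3 : S := (1, 1).

Definition JM (n : nat) (M : 'M[S]_n) (U : {set 'I_n}) : {set 'I_n} :=
  [set j | (\sum_(i in U) M i j) == s1].

(* symmetric difference = addition in P_n *)
Definition symdiff (n : nat) (A B : {set 'I_n}) : {set 'I_n} :=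
  (A :\: B) :|: (B :\: A).

Definition HW_matrix (n : nat) (M : 'M[S]_n) : Prop :=
  [/\ (forall i, M i i = s1),
      (forall i j, i != j -> M i j = s2 \/ M i j = s3),
      (forall j, \sum_i M i j = s0) &
      (forall U : {set 'I_n}, U != set0 -> U != setT -> JM M U != set0)].

(* |X|_2 = |X| mod 2 = odd #|X| ; binom(|U|,2) mod 2 = odd 'C(#|U|,2) *)
Definition spinc_set (n : nat) (M : 'M[S]_n) (T : {set 'I_n}) : Prop :=
  forall U : {set 'I_n},
    odd #|symdiff (JM M U) U :&: T| = odd 'C(#|U|, 2).

From mathcomp Require Import all_boot all_order all_algebra zify.
Import GRing.Theory.
Set Implicit Arguments. Unset Strict Implicit. Unset Printing Implicit Defensive.

(* Write each entry of an HW-matrix M as a pair (a_ij, [i != j]) in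
   F_2 x F_2; a_ij (called [arc] below) holds on the diagonal and, off the
   diagonal, exactly when M_ij = 3.  The axioms of M and the spin^c
   condition on a set T become three facts about the relation a:
   - vanishing column sums: each j has an odd number of i != j with a_ij;
   - J_M({i,j,k}) is nonempty: of three distinct indices, two agree on
     whether they have an arc to the third;
   - the spin^c condition for U = {i,k}:
       l_i + l_k + [k in T] a_ik + [i in T] a_ki = 1, where
       l_i = #{x in T - i | a_ix} + [i in T]  (mod 2).
   The second half of the file shows that these facts are contradictory on
   a set of odd size n >= 5.  The last relation makes l injective off T, so
   m = |T| >= n - 2 >= 3.  For v in T let d(v) be its in-degree inside T, and let its
   score be d(v) if l_v = 0 and m - 1 - d(v) if l_v = 1.  The three facts
   make the score injective from T into [0, m), hence onto, while all scores
   have the same parity: impossible, since both 0 and 1 are scores. *)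

Section ParityOfCards.
Variable I : finType.

Lemma odd_card_xor (P : pred I) : odd #|[set x | P x]| = \big[addb/false]_x P x.
Proof.
rewrite cardsE -sum1_card big_mkcond /= (big_morph odd oddD (erefl : odd 0 = false)).
by apply: eq_bigr => x _; rewrite unfold_in; case: (P x).
Qed.

Lemma odd_card_split (P Q R : pred I) : (forall x, P x = Q x (+) R x) ->
  odd #|[set x | P x]| = odd #|[set x | Q x]| (+) odd #|[set x | R x]|.
Proof. by move=> PQR; rewrite !odd_card_xor -big_split; apply: eq_bigr. Qed.

Lemma odd_card_addb (Q R : pred I) :
  odd #|[set x | Q x (+) R x]| = odd #|[set x | Q x]| (+) odd #|[set x | R x]|.
Proof. exact: odd_card_split. Qed.

Lemma odd_card_point (a : I) (b : bool) : odd #|[set x | (x == a) && b]| = b.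
Proof.
case: b; last by rewrite (eq_card (_ : _ =i pred0)) ?card0 // => x; rewrite !inE andbF.
by rewrite (eq_card (_ : _ =i pred1 a)) ?card1 // => x; rewrite !inE andbT.
Qed.

Lemma odd_card_remove (P : pred I) (z : I) :
  odd #|[set x | P x]| = odd #|[set x | (x != z) && P x]| (+) P z.
Proof.
rewrite (@odd_card_split _ (fun x => (x != z) && P x) (fun x => (x == z) && P z)).
  by rewrite odd_card_point.
by move=> x; case: eqP => [->|] /=; rewrite ?addbF.
Qed.

Lemma injective_onto_iota (A : {set I}) (f : I -> nat) :
  {in A &, injective f} -> (forall x, x \in A -> f x < #|A|) ->
  forall k, k < #|A| -> exists2 x, x \in A & f x = k.
Proof.
move=> f_inj f_lt k k_lt.
have uniq_f : uniq (map f (enum A)).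
  by rewrite map_inj_in_uniq ?enum_uniq // => x y; rewrite !mem_enum; apply: f_inj.
have sub_f : {subset map f (enum A) <= iota 0 #|A|}.
  by move=> _ /mapP [x xA ->]; rewrite mem_iota add0n f_lt // -mem_enum.
have size_f : size (iota 0 #|A|) <= size (map f (enum A)).
  by rewrite size_iota size_map cardE.
have [_ eq_f] := uniq_min_size uniq_f sub_f size_f.
have : k \in map f (enum A) by rewrite eq_f mem_iota.
by case/mapP => x xA ->; exists x; rewrite // -mem_enum.
Qed.

End ParityOfCards.

Lemma sum_bool_F2 (I : finType) (P p : pred I) :
  (\sum_(i | P i) ((p i)%:R : 'F_2))%R = ((odd #|[set i | P i && p i]|)%:R)%R.
Proof.
rewrite -modn2 (Fp_nat_mod (isT : prime 2)) cardsE -sum1_card big_mkcondr natr_sum.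
by apply: eq_bigr => i _; case: (p i).
Qed.

Lemma sum_S (I : finType) (P : pred I) (F : I -> S) :
  (\sum_(i | P i) F i)%R = ((\sum_(i | P i) (F i).1)%R, (\sum_(i | P i) (F i).2)%R).
Proof. by elim/big_rec3: _ => [|i [a b] c d _ ->]. Qed.

Lemma big_set2 (R : nmodType) (I : finType) (i k : I) (F : I -> R) : i != k ->
  (\sum_(y in (i |: [set k])) F y = F i + F k)%R.
Proof. by move=> ik; rewrite big_setU1 ?inE // big_set1. Qed.

Lemma big_set3 (R : nmodType) (I : finType) (i j k : I) (F : I -> R) :
  i != j -> j != k -> i != k -> (\sum_(y in (i |: (j |: [set k]))) F y = F i + F j + F k)%R.
Proof.
move=> ij jk ik; rewrite big_setU1 ?inE ?negb_or ?ij ?ik //.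
by rewrite big_set2 //= addrA.
Qed.

Section HWMatrix.
Variables (n : nat) (M : 'M[S]_n).
Hypothesis hwM : HW_matrix M.

(* The first F_2-coordinate of M_ij; it holds on the diagonal, and off the
   diagonal exactly when M_ij = 3. *)
Definition arc (i j : 'I_n) : bool := (M i j).1 == 1%R.

Lemma entry_bits (i j : 'I_n) :
  M i j = (((arc i j)%:R : 'F_2)%R, ((i != j)%:R : 'F_2)%R).
Proof.
have [dM offM _ _] := hwM; rewrite /arc.
case: (eqVneq i j) => [<-|ij]; first by rewrite dM.
by case: (offM i j ij) => ->.
Qed.

Lemma arc_diag (j : 'I_n) : arc j j.
Proof. by have [dM _ _ _] := hwM; rewrite /arc dM. Qed.

Lemma mem_JM (U : {set 'I_n}) (x : 'I_n) :
  (x \in JM M U) = (\sum_(y in U) ((arc y x)%:R : 'F_2) == 1)%R &&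
                   (\sum_(y in U) ((y != x)%:R : 'F_2) == 0)%R.
Proof. by rewrite inE; under eq_bigr => y _ do rewrite entry_bits; rewrite sum_S. Qed.

Lemma column_parity (j : 'I_n) : odd #|[set i | (i != j) && arc i j]|.
Proof.
have [_ _ colM _] := hwM; have := colM j.
under eq_bigr => i _ do rewrite entry_bits.
rewrite sum_S => /pair_equal_spec[/eqP + _]; rewrite sum_bool_F2.
by rewrite (odd_card_remove _ j) /= arc_diag; case: (odd _).
Qed.

(* Nonemptiness of J_M({i,j,k}): two of three distinct indices agree on
   whether they have an [arc] to the third. *)
Lemma triangle (i j k : 'I_n) : 4 <= n -> i != j -> j != k -> i != k ->
  [|| arc j i == arc k i, arc i j == arc k j | arc i k == arc j k].
Proof.
move=> n4 ij jk ik; have [_ _ _ JM0] := hwM.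
have ji : j != i by rewrite eq_sym.
have kj : k != j by rewrite eq_sym.
have ki : k != i by rewrite eq_sym.
have U0 : (i |: (j |: [set k])) != set0 by apply/set0Pn; exists i; rewrite !inE eqxx.
have UT : (i |: (j |: [set k])) != setT.
  apply: contraTneq n4 => UT; rewrite -ltnNge -[n]card_ord -cardsT -UT.
  by rewrite !cardsU1 cards1 !inE; case: (_ == _); case: (_ == _); case: (_ == _).
have /set0Pn[x] := JM0 _ U0 UT; rewrite mem_JM !big_set3 //.
case: (eqVneq x i) => [->|xi].
  by rewrite arc_diag ?ji ?ki /=; case: (arc j i); case: (arc k i).
case: (eqVneq x j) => [->|xj].
  by rewrite arc_diag ?ij ?kj /=; case: (arc i j); case: (arc k j); rewrite ?orbT.
case: (eqVneq x k) => [->|xk].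
  by rewrite arc_diag ?ik ?jk /=; case: (arc i k); case: (arc j k); rewrite ?orbT.
by rewrite andbF.
Qed.

Lemma mem_JM_pair (i k x : 'I_n) : i != k ->
  (x \in JM M (i |: [set k])) = [&& x != i, x != k & arc i x (+) arc k x].
Proof.
move=> ik; have ki : k != i by rewrite eq_sym.
rewrite mem_JM !big_set2 //.
case: (eqVneq x i) => [->|_]; first by rewrite ?ki andbF.
case: (eqVneq x k) => [->|_]; first by rewrite ?ik andbF.
by rewrite andbT; case: (arc i x); case: (arc k x).
Qed.

Definition lambda (T : {set 'I_n}) (i : 'I_n) : bool :=
  odd #|[set x | [&& x \in T, x != i & arc i x]]| (+) (i \in T).

Lemma spinc_pair (T : {set 'I_n}) : spinc_set M T -> forall i k, i != k ->
  lambda T i (+) lambda T k (+) ((k \in T) && arc i k) (+) ((i \in T) && arc k i).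
Proof.
move=> spT i k ik; have ki : k != i by rewrite eq_sym.
pose out y z x := (x != z) && [&& x \in T, x != y & arc y x].
have := spT (i |: [set k]); rewrite cardsU1 inE ik cards1 /=.
(* J_M({i,k}) avoids {i,k}, so the counted set is {i,k} together with the
   points x of T - {i,k} receiving an arc from exactly one of i and k. *)
rewrite (@eq_card _ _ [set x | ((x == i) && (i \in T)) (+) ((x == k) && (k \in T))
                                 (+) out i k x (+) out k i x]); last first.
  move=> x; rewrite /symdiff in_setI in_setU !in_setD mem_JM_pair // !inE /out.
  case: (eqVneq x i) => [->|_]; first by rewrite /= (negbTE ik); case: (i \in T).
  case: (eqVneq x k) => [->|_]; first by case: (k \in T).
  by rewrite /=; case: (arc i x); case: (arc k x); case: (x \in T).
rewrite !odd_card_addb !odd_card_point.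
rewrite /lambda (odd_card_remove (fun x => [&& x \in T, x != i & arc i x]) k).
rewrite (odd_card_remove (fun x => [&& x \in T, x != k & arc k x]) i) /out /= ik ki.
by case: (odd _); case: (odd _); case: (i \in T); case: (k \in T);
   case: (arc i k); case: (arc k i).
Qed.

End HWMatrix.

Section ScoreArgument.
Variables (I : finType) (T : {set I}) (A : I -> I -> bool) (l : I -> bool).
Hypothesis pair_rel : forall i k, i != k ->
  l i (+) l k (+) ((k \in T) && A i k) (+) ((i \in T) && A k i).
Hypothesis triangle_rel : forall i j k, i != j -> j != k -> i != k ->
  [|| A j i == A k i, A i j == A k j | A i k == A j k].
Hypothesis column_odd : forall j, odd #|[set i | (i != j) && A i j]|.

(* Two points outside T with the same weight would violate [pair_rel];
   hence l is injective off T and T misses at most two points. *)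
Lemma card_compl_le2 : #|~: T| <= 2.
Proof.
have l_inj : {in ~: T &, injective l}.
  move=> z z'; rewrite !inE => /negbTE zT /negbTE z'T lzz'; apply/eqP/negP => /negP zz'.
  by have := pair_rel zz'; rewrite zT z'T lzz' addbb.
by rewrite -(card_in_imset l_inj) (leq_trans (max_card _)) // card_bool.
Qed.

Local Notation m := #|T|.

Lemma pair_rel_T u v : u \in T -> v \in T -> u != v -> l u (+) l v (+) A u v (+) A v u.
Proof. by move=> uT vT /pair_rel; rewrite uT vT. Qed.

Lemma three_points u v w : u \in T -> v \in T -> w \in T ->
  u != v -> v != w -> u != w ->
  [/\ l u = l v -> A u v -> A w u -> A w v,
      l u = false -> l v = true -> A u v -> A w u || A w v &
      l u = false -> l v = true -> ~~ A u v -> ~~ (A w u && A w v)].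
Proof.
move=> uT vT wT uv vw uw.
move: (pair_rel_T uT vT uv) (pair_rel_T uT wT uw) (pair_rel_T vT wT vw) (triangle_rel uv vw uw).
by case: (A u v); case: (A v u); case: (A u w); case: (A w u); case: (A v w); case: (A w v);
   case: (l u); case: (l v); case: (l w).
Qed.

Definition in_nbhd (v : I) : {set I} := [set w in T | (w != v) && A w v].

Lemma card_in_nbhd_le v : v \in T -> #|in_nbhd v| <= m.-1.
Proof.
move=> vT; rewrite (cardsD1 v T) vT /=; apply/subset_leq_card/subsetP => w.
by rewrite !inE => /and3P[-> -> _].
Qed.

Lemma in_nbhd_proper u v : u \in T -> v \in T -> u != v -> l u = l v -> A u v ->
  #|in_nbhd u| < #|in_nbhd v|.
Proof.
move=> uT vT uv luv Auv; apply/proper_card/properP; split.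
  apply/subsetP => w; rewrite !inE => /and3P[wT wu Awu].
  have wv : w != v.
    by apply: contraTneq Awu => ->; have := pair_rel_T uT vT uv; rewrite luv addbb Auv; case: (A v u).
  have [uw vw] : u != w /\ v != w by rewrite ![_ == w]eq_sym.
  by have [same _ _] := three_points uT vT wT uv vw uw; rewrite wT wv (same luv Auv Awu).
by exists u; rewrite !inE ?uT ?uv ?Auv ?eqxx.
Qed.

(* Equal weights force different in-degrees, since [pair_rel] puts an arc
   between the two points. *)
Lemma in_nbhd_card_neq u v : u \in T -> v \in T -> u != v -> l u = l v ->
  #|in_nbhd u| != #|in_nbhd v|.
Proof.
move=> uT vT uv luv; have := pair_rel_T uT vT uv; rewrite luv addbb /=.
case Auv: (A u v) => /= Avu; first by rewrite neq_ltn in_nbhd_proper.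
by rewrite neq_ltn (in_nbhd_proper vT uT) ?orbT // eq_sym.
Qed.

Lemma in_nbhd_cover u v : u \in T -> v \in T -> u != v -> l u = false -> l v = true ->
  A u v -> m <= #|in_nbhd u| + #|in_nbhd v|.
Proof.
move=> uT vT uv lu lv Auv.
have Avu : A v u by have := pair_rel_T uT vT uv; rewrite lu lv Auv; case: (A v u).
apply: leq_trans (leq_card_setU _ _); apply/subset_leq_card/subsetP => w wT.
case: (eqVneq w u) => [->|wu]; first by rewrite !inE uT uv Auv orbT.
case: (eqVneq w v) => [->|wv]; first by rewrite !inE vT eq_sym uv Avu.
have [uw vw] : u != w /\ v != w by rewrite ![_ == w]eq_sym.
by have [_ cover _] := three_points uT vT wT uv vw uw; rewrite !inE wT wu wv cover.
Qed.

Lemma in_nbhd_disjoint u v : u \in T -> v \in T -> u != v -> l u = false -> l v = true ->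
  ~~ A u v -> #|in_nbhd u| + #|in_nbhd v| <= m - 2.
Proof.
move=> uT vT uv lu lv nAuv.
have nAvu : ~~ A v u by have := pair_rel_T uT vT uv; rewrite lu lv (negbTE nAuv); case: (A v u).
have disj : in_nbhd u :&: in_nbhd v = set0.
  apply/setP => w; rewrite !inE; apply/negP => /andP[/and3P[wT wu Awu] /and3P[_ wv Awv]].
  have [uw vw] : u != w /\ v != w by rewrite ![_ == w]eq_sym.
  by have [_ _ /(_ lu lv nAuv)] := three_points uT vT wT uv vw uw; rewrite Awu Awv.
rewrite -cardsUI disj cards0 addn0.
have -> : m - 2 = #|(T :\ u) :\ v|.
  by rewrite (cardsD1 u T) uT (cardsD1 v (T :\ u)) !inE eq_sym uv vT; lia.
apply/subset_leq_card/subsetP => w; rewrite !inE.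
by case/orP => /and3P[-> wx Awx]; rewrite wx ?andbT;
   apply: contraNneq wx => wuv; move: Awx; rewrite wuv ?(negbTE nAuv) ?(negbTE nAvu).
Qed.

Definition off_parity (b : bool) : bool := odd #|[set z | (z \notin T) && (l z == b)]|.

(* Column parity: an arc z -> v with z off T is forced by the weights, so
   the in-degree inside T has parity determined by the weight of v. *)
Lemma in_nbhd_parity v : v \in T -> odd #|in_nbhd v| = ~~ off_parity (l v).
Proof.
move=> vT; have := column_odd v.
rewrite (@odd_card_split _ _ [pred i | [&& i \in T, i != v & A i v]]
                          (fun i => (i \notin T) && (l i == l v))).
  by rewrite /off_parity; case: (odd _); case: (odd _).
move=> i; rewrite !inE; case iT: (i \in T) => /=; first by rewrite addbF.
have iv : i != v by apply: contraFneq iT => ->.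
by have := pair_rel iv; rewrite iT vT iv /=; case: (l i); case: (l v); case: (A i v).
Qed.

Definition score (v : I) : nat := if l v then m.-1 - #|in_nbhd v| else #|in_nbhd v|.

Lemma score_lt v : v \in T -> score v < m.
Proof.
move=> vT; have := card_in_nbhd_le vT; rewrite /score.
have : 0 < m by apply/card_gt0P; exists v.
by case: (l v); lia.
Qed.

Lemma score_inj : {in T &, injective score}.
Proof.
move=> u v uT vT eq_s; apply/eqP; apply: contraT => uv.
have vu : v != u by rewrite eq_sym.
have m_gt1 : 1 < m by apply/card_gt1P; exists u, v.
have du := card_in_nbhd_le uT; have dv := card_in_nbhd_le vT.
move: eq_s; rewrite /score; case lu: (l u); case lv: (l v).
- by have := in_nbhd_card_neq uT vT uv (etrans lu (esym lv)); lia.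
- case Avu: (A v u).
    by have := in_nbhd_cover vT uT vu lv lu Avu; lia.
  by have := in_nbhd_disjoint vT uT vu lv lu (negbT Avu); lia.
- case Auv: (A u v).
    by have := in_nbhd_cover uT vT uv lu lv Auv; lia.
  by have := in_nbhd_disjoint uT vT uv lu lv (negbT Auv); lia.
- by have := in_nbhd_card_neq uT vT uv (etrans lu (esym lv)); move/eqP.
Qed.

Hypotheses (odd_I : odd #|I|) (card_I : 4 <= #|I|).

Lemma score_parity v : v \in T -> odd (score v) = ~~ off_parity false.
Proof.
move=> vT; have m_gt0 : 0 < m by apply/card_gt0P; exists v.
have odd_m1 : odd m.-1 = off_parity true (+) off_parity false.
  rewrite /off_parity -(@odd_card_split _ (fun z => z \notin T)); last first.
    by move=> z; case: (z \in T); case: (l z).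
  have -> : [set z | z \notin T] = ~: T by apply/setP => z; rewrite !inE.
  have := odd_I; rewrite -(cardsC T) -(prednK m_gt0) /= oddD.
  by case: (odd _); case: (odd _).
rewrite /score; case lv: (l v); last by rewrite in_nbhd_parity // lv.
rewrite oddB ?card_in_nbhd_le // odd_m1 in_nbhd_parity // lv.
by case: (off_parity _); case: (off_parity _).
Qed.

(* The scores form a bijection from T onto [0, m) with constant parity;
   but m >= 2, so both 0 and 1 are scores. *)
Lemma score_contradiction : False.
Proof.
have m_ge2 : 2 <= m by have := card_I; rewrite -(cardsC T); have := card_compl_le2; lia.
have [v0 v0T s0] := injective_onto_iota score_inj score_lt (ltnW m_ge2).
have [v1 v1T s1] := injective_onto_iota score_inj score_lt m_ge2.
by have := score_parity v0T; rewrite -(score_parity v1T) s0 s1.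
Qed.

End ScoreArgument.

Theorem mainTheorem18 (n : nat) (M : 'M[S]_n) :
  (5 <= n)%N -> odd n -> HW_matrix M -> ~ (exists T : {set 'I_n}, spinc_set M T).
Proof.
move=> n_ge5 odd_n hwM [T spT].
apply: (@score_contradiction _ T (arc M) (lambda M T)).
- by move=> i k; apply: spinc_pair.
- by move=> i j k ij jk ik; have := triangle hwM (ltnW n_ge5) ij jk ik.
- by move=> j; have := column_parity hwM j.
- by rewrite card_ord.
- by rewrite card_ord ltnW.
Qed.
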